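(* Let $\mathbf r(x,y)$ be the middle surface of a membrane O surface with constant purely normal load $q_n\neq 0$ (setting and notation as in the context), and suppose it is of the 2nd kind, i.e. the curvature line coordinates $(x,y)$ are such that $$2\overline{A}_1 H_\circ - q_n A_1^2 = -q_n,\qquad 2\overline{A}_2 K_\circ - q_n A_2^2 = -q_n$$ (the normalization $f(x)=g(y)=q_n$). Then the first and third fundamental forms are represented as $$\mathrm{I} = (\cos\alpha + h\sin\alpha)^2\,dx^2 + (\sin\alpha - h\cos\alpha)^2\,dy^2,\qquad \mathrm{III} = e^{2\xi}(\sin^2\alpha\,dx^2 + \cos^2\alpha\,dy^2),$$ where the functions $h,\alpha,\xi$ of $(x,y)$ satisfy the system $$h_x = (h+\cot\alpha)\,\xi_x,\qquad h_y = (h-\tan\alpha)\,\xi_y,$$ $$\xi_{xy} = \xi_x\xi_y + (\log\sin\alpha)_y\,\xi_x + (\log\cos\alpha)_x\,\xi_y,$$ $$(-\alpha_x + \xi_x\cot\alpha)_x + (\alpha_y + \xi_y\tan\alpha)_y + e^{2\xi}\sin\alpha\cos\alpha = 0.$$ Furthermore, the stress resultants are given by $$T_1 = \frac{q_n e^{-\xi}}{2}\,\frac{2h\sin\alpha + (1-h^2)\cos\alpha}{\sin\alpha - h\cos\alpha},\qquad T_2 = \frac{q_n e^{-\xi}}{2}\,\frac{2h\cos\alpha - (1-h^2)\sin\alpha}{\cos\alpha + h\sin\alpha}.$$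
   Context: Let $\mathbf r(x,y)$ be a smooth surface in $\mathbb R^3$ parametrized by curvature line coordinates $(x,y)$, normalized so that $\mathbf r_x = A_1\mathbf X$, $\mathbf r_y = A_2\mathbf Y$ with $\mathbf X,\mathbf Y$ orthonormal. Let $\mathbf N = \mathbf X\times\mathbf Y$, let $\kappa_1,\kappa_2$ be the principal curvatures along the $x$- and $y$-lines, and set $H_\circ = -\kappa_1 A_1$, $K_\circ = -\kappa_2 A_2$, so that $\mathbf N_x = H_\circ\mathbf X$, $\mathbf N_y = K_\circ\mathbf Y$; the first fundamental form is $\mathrm I = A_1^2dx^2 + A_2^2dy^2$ and the third is $\mathrm{III} = H_\circ^2dx^2 + K_\circ^2dy^2$. Put $p=(A_1)_y/A_2$, $q = (A_2)_x/A_1$; the Gauss–Mainardi–Codazzi equations are $(H_\circ)_y = pK_\circ$, $(K_\circ)_x = qH_\circ$, $p_y+q_x+H_\circ K_\circ = 0$. The surface is the middle surface of a shell membrane on which a constant purely normal load $q_n\neq0$ (per unit area) acts, with principal stress lines coinciding with principal curvature lines; the in-plane normal stress resultants $T_1,T_2$ satisfy the equilibrium equations $(T_1)_x + (\log A_1)_x(T_1-T_2)=0$, $(T_2)_y + (\log A_2)_y(T_2-T_1)=0$, $\kappa_1T_1+\kappa_2T_2+q_n=0$. Such a configuration is called a membrane O surface. Set $\overline A_1 = T_2A_1$, $\overline A_2 = T_1A_2$. Then $f := q_nA_1^2 - 2\overline A_1H_\circ$ depends only on $x$ and $g := q_nA_2^2 - 2\overline A_2K_\circ$ depends only on $y$.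 The membrane O surface is said to be of the 1st kind if the curvature line coordinates can be chosen so that $f=-g=q_n$, and of the 2nd kind if they can be chosen so that $f=g=q_n$. *)

From Stdlib Require Import Reals List.
From Coquelicot Require Import Coquelicot.
Open Scope R_scope.

Definition dx (f : R -> R -> R) : R -> R -> R :=
  fun x y => Derive (fun t => f t y) x.
Definition dy (f : R -> R -> R) : R -> R -> R :=
  fun x y => Derive (fun t => f x t) y.

Definition Dw (l : list bool) (f : R -> R -> R) : R -> R -> R :=
  fold_right (fun (b : bool) g => if b then dx g else dy g) f l.

Definition smooth_on (U : R -> R -> Prop) (f : R -> R -> R) : Prop :=
  forall (l : list bool) (x y : R), U x y ->
    ex_derive (fun t => Dw l f t y) x /\
    ex_derive (fun t => Dw l f x t) y /\
    continuous (fun p : R * R => Dw l f (fst p) (snd p)) (x, y).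

Definition open2 (U : R -> R -> Prop) : Prop :=
  forall x y, U x y -> exists eps, 0 < eps /\
    forall x' y', Rabs (x' - x) < eps -> Rabs (y' - y) < eps -> U x' y'.

Definition square (x0 y0 eps : R) : R -> R -> Prop :=
  fun x y => Rabs (x - x0) < eps /\ Rabs (y - y0) < eps.

Definition V3 := (R * R * R)%type.
Definition c1 (v : V3) : R := fst (fst v).
Definition c2 (v : V3) : R := snd (fst v).
Definition c3 (v : V3) : R := snd v.
Definition dot (u v : V3) : R := c1 u * c1 v + c2 u * c2 v + c3 u * c3 v.
Definition cross (u v : V3) : V3 :=
  (c2 u * c3 v - c3 u * c2 v, c3 u * c1 v - c1 u * c3 v, c1 u * c2 v - c2 u * c1 v).
Definition vscale (a : R) (v : V3) : V3 := (a * c1 v, a * c2 v, a * c3 v).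

Definition dxV (F : R -> R -> V3) : R -> R -> V3 :=
  fun x y => (dx (fun s t => c1 (F s t)) x y,
              dx (fun s t => c2 (F s t)) x y,
              dx (fun s t => c3 (F s t)) x y).
Definition dyV (F : R -> R -> V3) : R -> R -> V3 :=
  fun x y => (dy (fun s t => c1 (F s t)) x y,
              dy (fun s t => c2 (F s t)) x y,
              dy (fun s t => c3 (F s t)) x y).
Definition smoothV (U : R -> R -> Prop) (F : R -> R -> V3) : Prop :=
  smooth_on U (fun s t => c1 (F s t)) /\
  smooth_on U (fun s t => c2 (F s t)) /\
  smooth_on U (fun s t => c3 (F s t)).

Definition normal (X Y : R -> R -> V3) : R -> R -> V3 :=
  fun x y => cross (X x y) (Y x y).

(** H_circ = - kappa_1 A_1, K_circ = - kappa_2 A_2. *)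
Definition circ (k A : R -> R -> R) : R -> R -> R := fun x y => - k x y * A x y.

(** The normal equilibrium equation and the two normalizations [f = g = qn] eliminate the
    stresses and leave [(H A2 - K A1)^2 = H^2 + K^2], with [H], [K] the circled curvatures.
    So, writing [e^xi = |H A2 - K A1|], [sg] for the sign of [H A2 - K A1] and [al] for the
    polar angle of [(-K, sg H)], one has [H = sg e^xi sin al] and [K = - e^xi cos al], and the
    relation [H A2 - K A1 = sg e^xi] forces [A1 = sg (cos al + h sin al)] and
    [A2 = sin al - h cos al] for a unique [h].  In these variables the two Codazzi equations
    become the first-order equations for [h], their compatibility [h_xy = h_yx] is the equation
    for [xi_xy], and the Gauss equation, with [p = -sg (al_y + xi_y tan al)] and
    [q = -sg (-al_x + xi_x cot al)], is the last equation of the system.  The stresses are read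
    off the normalizations: [T1 = qn (A2^2 - 1) / (2 A2 K)], [T2 = qn (A1^2 - 1) / (2 A1 H)]. *)

From Stdlib Require Import Reals List Lia Lra.
From Coquelicot Require Import Coquelicot.
Open Scope R_scope.

Lemma open2_locally_x W x y : open2 W -> W x y -> locally x (fun t => W t y).
Proof.
  intros HW Hxy. destruct (HW x y Hxy) as [e [He Hball]].
  exists (mkposreal e He). intros t Ht. apply Hball; [exact Ht|].
  rewrite Rminus_diag, Rabs_R0; exact He.
Qed.

Lemma open2_locally_y W x y : open2 W -> W x y -> locally y (fun t => W x t).
Proof.
  intros HW Hxy. destruct (HW x y Hxy) as [e [He Hball]].
  exists (mkposreal e He). intros t Ht. apply Hball; [|exact Ht].
  rewrite Rminus_diag, Rabs_R0; exact He.
Qed.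

Lemma open2_locally W x y : open2 W -> W x y ->
  locally (x, y) (fun p : R * R => W (fst p) (snd p)).
Proof.
  intros HW Hxy. destruct (HW x y Hxy) as [e [He Hball]].
  exists (mkposreal e He). intros [u v] [Hu Hv]. apply Hball; assumption.
Qed.

Section LocalPartials.
Variable W : R -> R -> Prop.
Hypothesis W_open : open2 W.

Lemma dx_ext_on f g x y : W x y -> (forall s t, W s t -> f s t = g s t) ->
  dx f x y = dx g x y.
Proof.
  intros Hxy Hfg. apply Derive_ext_loc.
  generalize (open2_locally_x W x y W_open Hxy). apply filter_imp. intros t Ht. apply Hfg, Ht.
Qed.

Lemma dy_ext_on f g x y : W x y -> (forall s t, W s t -> f s t = g s t) ->
  dy f x y = dy g x y.
Proof.
  intros Hxy Hfg. apply Derive_ext_loc.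
  generalize (open2_locally_y W x y W_open Hxy). apply filter_imp. intros t Ht. apply Hfg, Ht.
Qed.

Lemma Dw_ext_on l f g : (forall s t, W s t -> f s t = g s t) ->
  forall x y, W x y -> Dw l f x y = Dw l g x y.
Proof.
  intros Hfg. induction l as [|[|] l IH]; intros x y Hxy; simpl.
  - apply Hfg, Hxy.
  - apply dx_ext_on; assumption.
  - apply dy_ext_on; assumption.
Qed.

End LocalPartials.

(** * Finite-order smoothness *)

Definition diff_cont_at (f : R -> R -> R) (x y : R) : Prop :=
  ex_derive (fun t => f t y) x /\ ex_derive (fun t => f x t) y /\
  continuous (fun p : R * R => f (fst p) (snd p)) (x, y).

Definition smooth_upto (W : R -> R -> Prop) (n : nat) (f : R -> R -> R) : Prop :=
  forall l, (length l <= n)%nat -> forall x y, W x y -> diff_cont_at (Dw l f) x y.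

Lemma smooth_on_iff_upto W f : smooth_on W f <-> forall n, smooth_upto W n f.
Proof.
  split.
  - intros Hf n l _. apply Hf.
  - intros Hf l. apply (Hf (length l) l (le_n _)).
Qed.

Lemma smooth_upto_le W m n f : (m <= n)%nat -> smooth_upto W n f -> smooth_upto W m f.
Proof. intros Hmn Hf l Hl. apply Hf. lia. Qed.

Lemma smooth_upto_O W f : smooth_upto W 0 f <-> forall x y, W x y -> diff_cont_at f x y.
Proof.
  split.
  - intros Hf. apply (Hf nil (le_n _)).
  - intros Hf [|b l] Hl; [exact Hf | simpl in Hl; lia].
Qed.

Lemma Dw_snoc l b f : Dw (l ++ b :: nil) f = Dw l (if b then dx f else dy f).
Proof. unfold Dw. rewrite fold_right_app. reflexivity. Qed.

Lemma smooth_upto_S W n f : smooth_upto W (S n) f <->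
  smooth_upto W 0 f /\ smooth_upto W n (dx f) /\ smooth_upto W n (dy f).
Proof.
  split.
  - intros Hf. split; [|split]; [apply (smooth_upto_le W 0 (S n)); [lia|exact Hf] | |];
      intros l Hl; [specialize (Hf (l ++ true :: nil)) | specialize (Hf (l ++ false :: nil))];
      rewrite Dw_snoc, length_app in Hf; apply Hf; simpl; lia.
  - intros (H0 & Hx & Hy) l Hl.
    destruct l as [|b l]; [apply H0; simpl; lia|].
    destruct (exists_last (l := b :: l)) as [l' [a Ha]]; [discriminate|].
    rewrite Ha in Hl |- *. rewrite length_app in Hl; simpl in Hl. rewrite Dw_snoc.
    destruct a; [apply Hx | apply Hy]; lia.
Qed.

Lemma smooth_upto_ext W n f g : open2 W -> (forall x y, W x y -> f x y = g x y) ->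
  smooth_upto W n g -> smooth_upto W n f.
Proof.
  intros HW Hfg Hg l Hl x y Hxy. destruct (Hg l Hl x y Hxy) as (Gx & Gy & Gc).
  split; [|split].
  - apply ex_derive_ext_loc with (f := fun t => Dw l g t y); [|exact Gx].
    generalize (open2_locally_x W x y HW Hxy). apply filter_imp. intros t Ht.
    symmetry; apply (Dw_ext_on W HW l f g Hfg); exact Ht.
  - apply ex_derive_ext_loc with (f := fun t => Dw l g x t); [|exact Gy].
    generalize (open2_locally_y W x y HW Hxy). apply filter_imp. intros t Ht.
    symmetry; apply (Dw_ext_on W HW l f g Hfg); exact Ht.
  - apply continuous_ext_loc with (g := fun p : R * R => Dw l g (fst p) (snd p)); [|exact Gc].
    generalize (open2_locally W x y HW Hxy). apply filter_imp. intros p Hp.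
    symmetry; apply (Dw_ext_on W HW l f g Hfg); exact Hp.
Qed.

Lemma smooth_upto_step W n f fx fy : open2 W -> smooth_upto W 0 f ->
  (forall x y, W x y -> dx f x y = fx x y) -> (forall x y, W x y -> dy f x y = fy x y) ->
  smooth_upto W n fx -> smooth_upto W n fy -> smooth_upto W (S n) f.
Proof.
  intros HW H0 Efx Efy Hx Hy. apply smooth_upto_S. split; [exact H0|].
  split; apply smooth_upto_ext with (2 := Efx) || apply smooth_upto_ext with (2 := Efy); assumption.
Qed.

Lemma diff_cont_at_plus f g x y : diff_cont_at f x y -> diff_cont_at g x y ->
  diff_cont_at (fun s t => f s t + g s t) x y.
Proof.
  intros (Fx & Fy & Fc) (Gx & Gy & Gc). split; [|split].
  - apply (ex_derive_plus (fun t => f t y) (fun t => g t y)); assumption.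
  - apply (ex_derive_plus (fun t => f x t) (fun t => g x t)); assumption.
  - apply (continuous_plus (fun p : R * R => f (fst p) (snd p))
                           (fun p : R * R => g (fst p) (snd p))); assumption.
Qed.

Lemma diff_cont_at_mult f g x y : diff_cont_at f x y -> diff_cont_at g x y ->
  diff_cont_at (fun s t => f s t * g s t) x y.
Proof.
  intros (Fx & Fy & Fc) (Gx & Gy & Gc). split; [|split].
  - apply ex_derive_mult; assumption.
  - apply ex_derive_mult; assumption.
  - apply (continuous_mult (fun p : R * R => f (fst p) (snd p))
                           (fun p : R * R => g (fst p) (snd p))); assumption.
Qed.

Lemma diff_cont_at_comp phi phi' f x y : is_derive phi (f x y) (phi' (f x y)) ->
  diff_cont_at f x y -> diff_cont_at (fun s t => phi (f s t)) x y.
Proof.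
  intros Hphi (Fx & Fy & Fc). split; [|split].
  - eexists. apply (is_derive_comp phi (fun t => f t y)); [exact Hphi|].
    apply Derive_correct, Fx.
  - eexists. apply (is_derive_comp phi (fun t => f x t)); [exact Hphi|].
    apply Derive_correct, Fy.
  - apply (continuous_comp (fun p : R * R => f (fst p) (snd p)) phi); [exact Fc|].
    apply (ex_derive_continuous (K := R_AbsRing) (V := R_NormedModule) phi).
    eexists; exact Hphi.
Qed.

Lemma dx_comp phi phi' f x y : is_derive phi (f x y) (phi' (f x y)) ->
  ex_derive (fun t => f t y) x -> dx (fun s t => phi (f s t)) x y = phi' (f x y) * dx f x y.
Proof.
  intros Hphi Fx. apply is_derive_unique. rewrite Rmult_comm.
  apply (is_derive_comp phi (fun t => f t y)); [exact Hphi | apply Derive_correct, Fx].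
Qed.

Lemma dy_comp phi phi' f x y : is_derive phi (f x y) (phi' (f x y)) ->
  ex_derive (fun t => f x t) y -> dy (fun s t => phi (f s t)) x y = phi' (f x y) * dy f x y.
Proof.
  intros Hphi Fy. apply is_derive_unique. rewrite Rmult_comm.
  apply (is_derive_comp phi (fun t => f x t)); [exact Hphi | apply Derive_correct, Fy].
Qed.

Section SmoothClosure.
Variable W : R -> R -> Prop.
Hypothesis W_open : open2 W.

Lemma smooth_upto_const : forall n c, smooth_upto W n (fun _ _ => c).
Proof.
  assert (H0 : forall c, smooth_upto W 0 (fun _ _ => c)).
  { intro c. apply smooth_upto_O. intros x y _.
    split; [|split]; [apply ex_derive_const | apply ex_derive_const | apply continuous_const]. }
  induction n as [|n IH]; intro c; [apply H0|].
  apply (smooth_upto_step W n _ (fun _ _ => 0) (fun _ _ => 0) W_open (H0 c));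
    try apply IH; intros; apply (Derive_const c).
Qed.

Lemma smooth_upto_plus : forall n f g, smooth_upto W n f -> smooth_upto W n g ->
  smooth_upto W n (fun x y => f x y + g x y).
Proof.
  induction n as [|n IH]; intros f g Hf Hg.
  - rewrite smooth_upto_O in *. intros x y Hxy. apply diff_cont_at_plus; auto.
  - apply smooth_upto_S in Hf as (Hf0 & Hfx & Hfy), Hg as (Hg0 & Hgx & Hgy).
    rewrite smooth_upto_O in Hf0, Hg0.
    apply (smooth_upto_step W n _ (fun x y => dx f x y + dx g x y)
             (fun x y => dy f x y + dy g x y) W_open).
    + apply smooth_upto_O. intros x y Hxy. apply diff_cont_at_plus; auto.
    + intros x y Hxy. destruct (Hf0 x y Hxy) as (Fx & _), (Hg0 x y Hxy) as (Gx & _).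
      apply (Derive_plus (fun t => f t y) (fun t => g t y)); assumption.
    + intros x y Hxy. destruct (Hf0 x y Hxy) as (_ & Fy & _), (Hg0 x y Hxy) as (_ & Gy & _).
      apply (Derive_plus (fun t => f x t) (fun t => g x t)); assumption.
    + apply IH; assumption.
    + apply IH; assumption.
Qed.

Lemma smooth_upto_mult : forall n f g, smooth_upto W n f -> smooth_upto W n g ->
  smooth_upto W n (fun x y => f x y * g x y).
Proof.
  induction n as [|n IH]; intros f g Hf Hg.
  - rewrite smooth_upto_O in *. intros x y Hxy. apply diff_cont_at_mult; auto.
  - pose proof (smooth_upto_le W n (S n) f (le_S _ _ (le_n n)) Hf) as Hfn.
    pose proof (smooth_upto_le W n (S n) g (le_S _ _ (le_n n)) Hg) as Hgn.
    apply smooth_upto_S in Hf as (Hf0 & Hfx & Hfy), Hg as (Hg0 & Hgx & Hgy).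
    rewrite smooth_upto_O in Hf0, Hg0.
    apply (smooth_upto_step W n _ (fun x y => dx f x y * g x y + f x y * dx g x y)
             (fun x y => dy f x y * g x y + f x y * dy g x y) W_open).
    + apply smooth_upto_O. intros x y Hxy. apply diff_cont_at_mult; auto.
    + intros x y Hxy. destruct (Hf0 x y Hxy) as (Fx & _), (Hg0 x y Hxy) as (Gx & _).
      apply (Derive_mult (fun t => f t y) (fun t => g t y)); assumption.
    + intros x y Hxy. destruct (Hf0 x y Hxy) as (_ & Fy & _), (Hg0 x y Hxy) as (_ & Gy & _).
      apply (Derive_mult (fun t => f x t) (fun t => g x t)); assumption.
    + apply smooth_upto_plus; apply IH; assumption.
    + apply smooth_upto_plus; apply IH; assumption.
Qed.

(** The induction on the order goes through because [phi'] is itself built from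
    [phi] (as for the inverse, the logarithm and the arctangent). *)
Lemma smooth_upto_comp (P : R -> Prop) (phi phi' : R -> R) :
  (forall z, P z -> is_derive phi z (phi' z)) ->
  (forall n f, (forall x y, W x y -> P (f x y)) -> smooth_upto W n f ->
     smooth_upto W n (fun x y => phi (f x y)) -> smooth_upto W n (fun x y => phi' (f x y))) ->
  forall n f, (forall x y, W x y -> P (f x y)) -> smooth_upto W n f ->
    smooth_upto W n (fun x y => phi (f x y)).
Proof.
  intros Hphi Hphi'. induction n as [|n IH]; intros f HP Hf.
  - rewrite smooth_upto_O in *. intros x y Hxy.
    apply (diff_cont_at_comp phi phi'); auto.
  - pose proof (smooth_upto_le W n (S n) f (le_S _ _ (le_n n)) Hf) as Hfn.
    pose proof (Hphi' n f HP Hfn (IH f HP Hfn)) as Hder.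
    apply smooth_upto_S in Hf as (Hf0 & Hfx & Hfy).
    rewrite smooth_upto_O in Hf0.
    apply (smooth_upto_step W n _ (fun x y => phi' (f x y) * dx f x y)
             (fun x y => phi' (f x y) * dy f x y) W_open).
    + apply smooth_upto_O. intros x y Hxy. apply (diff_cont_at_comp phi phi'); auto.
    + intros x y Hxy. apply dx_comp; [apply Hphi, HP, Hxy | apply (Hf0 x y Hxy)].
    + intros x y Hxy. apply dy_comp; [apply Hphi, HP, Hxy | apply (Hf0 x y Hxy)].
    + apply smooth_upto_mult; assumption.
    + apply smooth_upto_mult; assumption.
Qed.

Lemma smooth_upto_inv : forall n f, (forall x y, W x y -> f x y <> 0) ->
  smooth_upto W n f -> smooth_upto W n (fun x y => / f x y).
Proof.
  apply (smooth_upto_comp (fun z => z <> 0) Rinv (fun z => -1 * (/ z * / z))).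
  - intros z Hz. replace (-1 * (/ z * / z)) with (- 1 / z ^ 2) by (field; exact Hz).
    apply (is_derive_inv (fun t => t) z 1 (is_derive_id z) Hz).
  - intros n f _ _ Hinv.
    apply (smooth_upto_mult n (fun _ _ => -1)); [apply smooth_upto_const|].
    apply smooth_upto_mult; exact Hinv.
Qed.

Lemma smooth_upto_ln : forall n f, (forall x y, W x y -> 0 < f x y) ->
  smooth_upto W n f -> smooth_upto W n (fun x y => ln (f x y)).
Proof.
  apply (smooth_upto_comp (fun z => 0 < z) ln Rinv).
  - apply is_derive_ln.
  - intros n f Hpos Hf _. apply smooth_upto_inv; [|exact Hf].
    intros x y Hxy. apply Rgt_not_eq, Hpos, Hxy.
Qed.

Lemma smooth_upto_atan : forall n f, smooth_upto W n f ->
  smooth_upto W n (fun x y => atan (f x y)).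
Proof.
  intros n f.
  apply (smooth_upto_comp (fun _ => True) atan (fun z => / (1 + z * z))); [| |easy].
  - intros z _. apply is_derive_atan.
  - clear n f. intros n f _ Hf _. apply smooth_upto_inv.
    + intros x y _. generalize (Rle_0_sqr (f x y)). unfold Rsqr. lra.
    + apply (smooth_upto_plus n (fun _ _ => 1)); [apply smooth_upto_const|].
      apply smooth_upto_mult; exact Hf.
Qed.

End SmoothClosure.

Section SmoothOn.
Variable W : R -> R -> Prop.
Hypothesis W_open : open2 W.

Lemma smooth_on_const c : smooth_on W (fun _ _ => c).
Proof. apply smooth_on_iff_upto. intro n. apply smooth_upto_const, W_open. Qed.

Lemma smooth_on_plus f g : smooth_on W f -> smooth_on W g ->
  smooth_on W (fun x y => f x y + g x y).
Proof.
  rewrite !smooth_on_iff_upto. intros Hf Hg n. apply smooth_upto_plus; auto.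
Qed.

Lemma smooth_on_mult f g : smooth_on W f -> smooth_on W g ->
  smooth_on W (fun x y => f x y * g x y).
Proof.
  rewrite !smooth_on_iff_upto. intros Hf Hg n. apply smooth_upto_mult; auto.
Qed.

Lemma smooth_on_scal c f : smooth_on W f -> smooth_on W (fun x y => c * f x y).
Proof. apply (smooth_on_mult (fun _ _ => c)), smooth_on_const. Qed.

Lemma smooth_on_opp f : smooth_on W f -> smooth_on W (fun x y => - f x y).
Proof.
  intros Hf. apply smooth_on_iff_upto. intro n.
  apply (smooth_upto_ext W n _ (fun x y => -1 * f x y) W_open); [intros; ring|].
  apply smooth_on_iff_upto, smooth_on_scal, Hf.
Qed.

Lemma smooth_on_minus f g : smooth_on W f -> smooth_on W g ->
  smooth_on W (fun x y => f x y - g x y).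
Proof. intros Hf Hg. apply smooth_on_plus, smooth_on_opp; assumption. Qed.

Lemma smooth_on_inv f : (forall x y, W x y -> f x y <> 0) -> smooth_on W f ->
  smooth_on W (fun x y => / f x y).
Proof.
  rewrite !smooth_on_iff_upto. intros Hnz Hf n. apply smooth_upto_inv; auto.
Qed.

Lemma smooth_on_div f g : (forall x y, W x y -> g x y <> 0) -> smooth_on W f ->
  smooth_on W g -> smooth_on W (fun x y => f x y / g x y).
Proof. intros Hnz Hf Hg. apply smooth_on_mult, smooth_on_inv; assumption. Qed.

Lemma smooth_on_ln f : (forall x y, W x y -> 0 < f x y) -> smooth_on W f ->
  smooth_on W (fun x y => ln (f x y)).
Proof.
  rewrite !smooth_on_iff_upto. intros Hpos Hf n. apply smooth_upto_ln; auto.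
Qed.

Lemma smooth_on_atan f : smooth_on W f -> smooth_on W (fun x y => atan (f x y)).
Proof.
  rewrite !smooth_on_iff_upto. intros Hf n. apply smooth_upto_atan; auto.
Qed.

Lemma dx_dy_comm f x y : smooth_on W f -> W x y -> dx (dy f) x y = dy (dx f) x y.
Proof.
  intros Hf Hxy. apply Schwarz.
  - destruct (W_open x y Hxy) as [e [He Hball]]. exists (mkposreal e He).
    intros u v Hu Hv. assert (Huv : W u v) by (apply Hball; assumption).
    destruct (Hf nil u v Huv) as (Fx & Fy & _).
    destruct (Hf (false :: nil) u v Huv) as (Fyx & _).
    destruct (Hf (true :: nil) u v Huv) as (_ & Fxy & _).
    repeat split; assumption.
  - apply continuity_2d_pt_filterlim, (Hf (true :: false :: nil) x y Hxy).
  - apply continuity_2d_pt_filterlim, (Hf (false :: true :: nil) x y Hxy).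
Qed.

End SmoothOn.

Lemma smooth_on_circ U k A : open2 U -> smooth_on U k -> smooth_on U A -> smooth_on U (circ k A).
Proof. intros HU Hk HA. apply (smooth_on_mult U HU), HA. apply (smooth_on_opp U HU), Hk. Qed.

Lemma circ_neq_0 k A x y : k x y <> 0 -> A x y <> 0 -> circ k A x y <> 0.
Proof.
  intros Hk HA.
  apply Rmult_integral_contrapositive_currified; [apply Ropp_neq_0_compat|]; assumption.
Qed.

Lemma smooth_on_subset U W f : (forall x y, W x y -> U x y) -> smooth_on U f -> smooth_on W f.
Proof. intros HWU Hf l x y Hxy. apply Hf, HWU, Hxy. Qed.

Lemma smooth_on_ex_dx W f x y : smooth_on W f -> W x y -> ex_derive (fun t => f t y) x.
Proof. intros Hf Hxy. apply (Hf nil x y Hxy). Qed.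

Lemma smooth_on_ex_dy W f x y : smooth_on W f -> W x y -> ex_derive (fun t => f x t) y.
Proof. intros Hf Hxy. apply (Hf nil x y Hxy). Qed.


Lemma open2_square x0 y0 e : open2 (square x0 y0 e).
Proof.
  intros x y [Hx Hy].
  exists (Rmin (e - Rabs (x - x0)) (e - Rabs (y - y0))). split.
  - apply Rmin_pos; lra.
  - intros x' y' Hx' Hy'.
    assert (m1 := Rmin_l (e - Rabs (x - x0)) (e - Rabs (y - y0))).
    assert (m2 := Rmin_r (e - Rabs (x - x0)) (e - Rabs (y - y0))).
    assert (t1 : Rabs (x' - x0) <= Rabs (x' - x) + Rabs (x - x0))
      by (replace (x' - x0) with ((x' - x) + (x - x0)) by ring; apply Rabs_triang).
    assert (t2 : Rabs (y' - y0) <= Rabs (y' - y) + Rabs (y - y0))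
      by (replace (y' - y0) with ((y' - y) + (y - y0)) by ring; apply Rabs_triang).
    split; lra.
Qed.

Lemma square_positive_near U g x0 y0 : open2 U -> smooth_on U g -> U x0 y0 -> 0 < g x0 y0 ->
  exists eps, 0 < eps /\ forall x y, square x0 y0 eps x y -> U x y /\ 0 < g x y.
Proof.
  intros HU Hg Hx0 Hpos.
  destruct (Hg nil x0 y0 Hx0) as (_ & _ & Hcont).
  apply continuity_2d_pt_filterlim in Hcont.
  destruct (Hcont (mkposreal _ Hpos)) as [d Hd].
  destruct (HU x0 y0 Hx0) as [eU [HeU Hball]].
  exists (Rmin eU d). split; [apply Rmin_pos; [exact HeU | apply cond_pos]|].
  intros x y [Hx Hy].
  assert (m1 := Rmin_l eU d). assert (m2 := Rmin_r eU d).
  split; [apply Hball; lra|].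
  assert (Hgd : Rabs (g x y - g x0 y0) < g x0 y0) by (apply (Hd x y); lra).
  apply Rabs_def2 in Hgd. lra.
Qed.

Lemma square_sign_near U D x0 y0 : open2 U -> smooth_on U D -> U x0 y0 -> D x0 y0 <> 0 ->
  exists eps sg, 0 < eps /\ (sg = 1 \/ sg = -1) /\
    forall x y, square x0 y0 eps x y -> U x y /\ 0 < sg * D x y.
Proof.
  intros HU HD Hx0 HD0.
  assert (Hsign : exists sg, (sg = 1 \/ sg = -1) /\ 0 < sg * D x0 y0)
    by (destruct (Rlt_or_le 0 (D x0 y0)); [exists 1 | exists (-1)]; split; lra).
  destruct Hsign as (sg & Hsg & Hpos).
  destruct (square_positive_near U (fun x y => sg * D x y) x0 y0 HU
              (smooth_on_scal U HU sg D HD) Hx0 Hpos) as (eps & Heps & Hnear).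
  exists eps, sg. auto.
Qed.

(** * Pointwise algebra of the polar frame *)

Lemma eq_from_scaled_difference k a b c d : c = d -> k <> 0 -> k * (a - b) = c - d -> a = b.
Proof.
  intros Hcd Hk E. rewrite Hcd, Rminus_diag in E.
  apply Rminus_diag_uniq, (Rmult_eq_reg_l k); [rewrite E; ring | exact Hk].
Qed.

Lemma sin2_cos2_pow a : sin a ^ 2 + cos a ^ 2 = 1.
Proof. rewrite <- (sin2_cos2 a). unfold Rsqr. ring. Qed.

Lemma cos_sin_double_atan t :
  cos (2 * atan t) = (1 - t ^ 2) / (1 + t ^ 2) /\ sin (2 * atan t) = 2 * t / (1 + t ^ 2).
Proof.
  assert (Hpos : 0 < 1 + t ^ 2) by (generalize (pow2_ge_0 t); lra).
  assert (Hr : sqrt (1 + t²) * sqrt (1 + t²) = 1 + t ^ 2)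
    by (rewrite sqrt_sqrt; unfold Rsqr; [ring | generalize (Rle_0_sqr t); unfold Rsqr; lra]).
  assert (Hr0 : sqrt (1 + t²) <> 0) by (intro Z; rewrite Z in Hr; lra).
  assert (Hcc : 1 / sqrt (1 + t²) * (1 / sqrt (1 + t²)) = / (1 + t ^ 2))
    by (rewrite <- Hr; field; exact Hr0).
  rewrite cos_2a_cos, sin_2a, sin_atan, cos_atan. split.
  - rewrite Rmult_assoc, Hcc. field. lra.
  - replace (2 * (t / sqrt (1 + t²)) * (1 / sqrt (1 + t²)))
      with (2 * t * (1 / sqrt (1 + t²) * (1 / sqrt (1 + t²)))) by (field; exact Hr0).
    rewrite Hcc. field. lra.
Qed.

(** [b / (e + a)] is the tangent of half the polar angle of [(a, b)]. *)
Lemma cos_sin_polar_angle a b e : 0 < e -> a ^ 2 + b ^ 2 = e ^ 2 -> 0 < e + a ->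
  cos (2 * atan (b / (e + a))) = a / e /\ sin (2 * atan (b / (e + a))) = b / e.
Proof.
  intros He Hab Hea. destruct (cos_sin_double_atan (b / (e + a))) as [-> ->].
  assert (Ht : 1 + (b / (e + a)) ^ 2 = 2 * e / (e + a)).
  { replace ((b / (e + a)) ^ 2) with (b ^ 2 / (e + a) ^ 2) by (field; lra).
    replace (b ^ 2) with (e ^ 2 - a ^ 2) by lra. field. lra. }
  rewrite Ht. split.
  - replace (1 - (b / (e + a)) ^ 2) with (2 - 2 * e / (e + a)) by lra. field. lra.
  - field. lra.
Qed.

Lemma polar_radius_gt e H K : 0 < e -> e ^ 2 = H ^ 2 + K ^ 2 -> H <> 0 -> 0 < e - K.
Proof. intros He He2 HH0. assert (0 < H ^ 2) by (apply pow2_gt_0, HH0). nra. Qed.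

Lemma polar_decomposition sg H K A1 A2 e al h :
  (sg = 1 \/ sg = -1) -> H <> 0 -> 0 < e -> e = sg * (H * A2 - K * A1) ->
  e ^ 2 = H ^ 2 + K ^ 2 ->
  al = 2 * atan (sg * H / (e - K)) -> h = (A1 * e + sg * K) / H ->
  H = sg * e * sin al /\ K = - e * cos al /\
  A1 = sg * (cos al + h * sin al) /\ A2 = sin al - h * cos al.
Proof.
  intros Hsg HH0 He0 He He2 Hal Hh.
  assert (Hpolar : (- K) ^ 2 + (sg * H) ^ 2 = e ^ 2).
  { rewrite He2. destruct Hsg as [-> | ->]; ring. }
  assert (HeK : 0 < e + - K) by (apply (polar_radius_gt e H K); assumption).
  replace (e - K) with (e + - K) in Hal by ring.
  destruct (cos_sin_polar_angle (- K) (sg * H) e He0 Hpolar HeK) as [Hc Hs].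
  rewrite <- Hal in Hc, Hs. rewrite Hc, Hs, Hh.
  assert (He0' : e <> 0) by lra.
  split; [|split; [|split]].
  - destruct Hsg as [-> | ->]; field; exact He0'.
  - field. exact He0'.
  - destruct Hsg as [-> | ->]; field; split; assumption.
  - apply (eq_from_scaled_difference (sg * H * e) _ _ _ _ He2).
    + repeat apply Rmult_integral_contrapositive_currified; try assumption.
      destruct Hsg as [-> | ->]; lra.
    + replace (e ^ 2) with (e * (sg * (H * A2 - K * A1))) by (rewrite <- He; ring).
      destruct Hsg as [-> | ->]; field; split; assumption.
Qed.

Lemma second_kind_identity qn k1 k2 A1 A2 T1 T2 : qn <> 0 ->
  k1 * T1 + k2 * T2 + qn = 0 ->
  qn * A1 ^ 2 - 2 * (T2 * A1) * (- k1 * A1) = qn ->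
  qn * A2 ^ 2 - 2 * (T1 * A2) * (- k2 * A2) = qn ->
  ((- k1 * A1) * A2 - (- k2 * A2) * A1) ^ 2 = (- k1 * A1) ^ 2 + (- k2 * A2) ^ 2.
Proof.
  intros Hqn Heq N1 N2.
  apply Rminus_diag_uniq, (Rmult_eq_reg_l qn); [|exact Hqn].
  transitivity (- 2 * k1 * k2 * A1 ^ 2 * A2 ^ 2 * (k1 * T1 + k2 * T2 + qn)
    + k2 ^ 2 * A2 ^ 2 * (qn * A1 ^ 2 - 2 * (T2 * A1) * (- k1 * A1) - qn)
    + k1 ^ 2 * A1 ^ 2 * (qn * A2 ^ 2 - 2 * (T1 * A2) * (- k2 * A2) - qn)).
  - ring.
  - rewrite Heq, N1, N2. ring.
Qed.

Lemma stress_in_polar_frame qn sg e s c h A1 A2 H K T1 T2 :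
  (sg = 1 \/ sg = -1) -> 0 < e -> s ^ 2 + c ^ 2 = 1 ->
  H = sg * e * s -> K = - e * c -> A1 = sg * (c + h * s) -> A2 = s - h * c ->
  H <> 0 -> K <> 0 -> A1 <> 0 -> A2 <> 0 ->
  qn * A1 ^ 2 - 2 * (T2 * A1) * H = qn -> qn * A2 ^ 2 - 2 * (T1 * A2) * K = qn ->
  T1 = qn * / e / 2 * ((2 * h * s + (1 - h ^ 2) * c) / (s - h * c)) /\
  T2 = qn * / e / 2 * ((2 * h * c - (1 - h ^ 2) * s) / (c + h * s)).
Proof.
  intros Hsg He SC RH RK RA1 RA2 HH0 HK0 HA10 HA20 N1 N2.
  assert (N1' : qn * A1 ^ 2 - 2 * (T2 * A1) * H = qn * (s ^ 2 + c ^ 2))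
    by (rewrite SC, Rmult_1_r; exact N1).
  assert (N2' : qn * A2 ^ 2 - 2 * (T1 * A2) * K = qn * (s ^ 2 + c ^ 2))
    by (rewrite SC, Rmult_1_r; exact N2).
  assert (Hs0 : s <> 0) by (intro Z; apply HH0; rewrite RH, Z; ring).
  assert (Hc0 : c <> 0) by (intro Z; apply HK0; rewrite RK, Z; ring).
  assert (HQ : c + h * s <> 0) by (intro Z; apply HA10; rewrite RA1, Z; ring).
  assert (HP : s - h * c <> 0) by (rewrite <- RA2; exact HA20).
  split.
  - apply (eq_from_scaled_difference (- 2 * A2 * K) _ _ _ _ N2').
    + repeat apply Rmult_integral_contrapositive_currified; assumption || lra.
    + rewrite RA2, RK. field. lra.
  - apply (eq_from_scaled_difference (- 2 * A1 * H) _ _ _ _ N1').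
    + repeat apply Rmult_integral_contrapositive_currified; assumption || lra.
    + rewrite RA1, RH. destruct Hsg as [-> | ->]; field; lra.
Qed.

(** * The Gauss-Codazzi system in the polar frame *)

Lemma dy_exp_sin (c : R) (u v : R -> R -> R) (x y : R) :
  ex_derive (fun t => u x t) y -> ex_derive (fun t => v x t) y ->
  dy (fun s t => c * exp (u s t) * sin (v s t)) x y
  = c * exp (u x y) * (dy u x y * sin (v x y) + cos (v x y) * dy v x y).
Proof. intros Hu Hv. unfold dy. apply is_derive_unique. auto_derive; auto. ring. Qed.

Lemma dx_exp_cos (c : R) (u v : R -> R -> R) (x y : R) :
  ex_derive (fun t => u t y) x -> ex_derive (fun t => v t y) x ->
  dx (fun s t => c * exp (u s t) * cos (v s t)) x y
  = c * exp (u x y) * (dx u x y * cos (v x y) - sin (v x y) * dx v x y).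
Proof. intros Hu Hv. unfold dx. apply is_derive_unique. auto_derive; auto. ring. Qed.

Lemma dy_cos_add_mul_sin (c : R) (w v : R -> R -> R) (x y : R) :
  ex_derive (fun t => w x t) y -> ex_derive (fun t => v x t) y ->
  dy (fun s t => c * (cos (v s t) + w s t * sin (v s t))) x y
  = c * (- sin (v x y) * dy v x y + dy w x y * sin (v x y) + w x y * cos (v x y) * dy v x y).
Proof. intros Hw Hv. unfold dy. apply is_derive_unique. auto_derive; auto. ring. Qed.

Lemma dx_sin_sub_mul_cos (w v : R -> R -> R) (x y : R) :
  ex_derive (fun t => w t y) x -> ex_derive (fun t => v t y) x ->
  dx (fun s t => sin (v s t) - w s t * cos (v s t)) x y
  = cos (v x y) * dx v x y - dx w x y * cos (v x y) + w x y * sin (v x y) * dx v x y.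
Proof. intros Hw Hv. unfold dx. apply is_derive_unique. auto_derive; auto. ring. Qed.

(** The derivative of [tan] is kept in the quotient-rule form
    [(sin^2 + cos^2) / cos^2], which keeps [dxdy_xi_eq] a rational identity. *)
Lemma dx_sub_tan_mul (w v z : R -> R -> R) (x y : R) :
  ex_derive (fun t => w t y) x -> ex_derive (fun t => v t y) x ->
  ex_derive (fun t => z t y) x -> cos (v x y) <> 0 ->
  dx (fun s t => (w s t - sin (v s t) / cos (v s t)) * z s t) x y
  = (dx w x y - dx v x y * (sin (v x y) ^ 2 + cos (v x y) ^ 2) / cos (v x y) ^ 2) * z x y
    + (w x y - sin (v x y) / cos (v x y)) * dx z x y.
Proof.
  intros Hw Hv Hz Hc.
  unfold dx. apply is_derive_unique. auto_derive; [repeat split; assumption|]. field. exact Hc.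
Qed.

Lemma dy_add_cot_mul (w v z : R -> R -> R) (x y : R) :
  ex_derive (fun t => w x t) y -> ex_derive (fun t => v x t) y ->
  ex_derive (fun t => z x t) y -> sin (v x y) <> 0 ->
  dy (fun s t => (w s t + cos (v s t) / sin (v s t)) * z s t) x y
  = (dy w x y - dy v x y * (sin (v x y) ^ 2 + cos (v x y) ^ 2) / sin (v x y) ^ 2) * z x y
    + (w x y + cos (v x y) / sin (v x y)) * dy z x y.
Proof.
  intros Hw Hv Hz Hs.
  unfold dy. apply is_derive_unique. auto_derive; [repeat split; assumption|]. field. exact Hs.
Qed.

(** The sign [sg] of [H A2 - K A1] sits on [H] and [A1]: placed on [A1] and [A2]
    instead, it would reappear as a factor in the stress formulas. *)
Definition polar_frame (W : R -> R -> Prop) (sg : R) (H K A1 A2 h al xi : R -> R -> R) : Prop :=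
  forall x y, W x y ->
    H x y = sg * exp (xi x y) * sin (al x y) /\
    K x y = - exp (xi x y) * cos (al x y) /\
    A1 x y = sg * (cos (al x y) + h x y * sin (al x y)) /\
    A2 x y = sin (al x y) - h x y * cos (al x y).

Definition gauss_codazzi (W : R -> R -> Prop) (H K A1 A2 : R -> R -> R) : Prop :=
  forall x y, W x y ->
    dy H x y = (dy A1 x y / A2 x y) * K x y /\
    dx K x y = (dx A2 x y / A1 x y) * H x y /\
    dy (fun s t => dy A1 s t / A2 s t) x y + dx (fun s t => dx A2 s t / A1 s t) x y
      + H x y * K x y = 0.

Section PolarFrame.
Variables (W : R -> R -> Prop) (sg : R) (H K A1 A2 h al xi : R -> R -> R).
Hypothesis W_open : open2 W.
Hypothesis sg_sign : sg = 1 \/ sg = -1.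
Hypotheses (h_smooth : smooth_on W h) (al_smooth : smooth_on W al) (xi_smooth : smooth_on W xi).
Hypothesis frame : polar_frame W sg H K A1 A2 h al xi.
Hypothesis nonzero : forall x y, W x y -> H x y <> 0 /\ K x y <> 0 /\ A1 x y <> 0 /\ A2 x y <> 0.
Hypothesis codazzi : gauss_codazzi W H K A1 A2.

Lemma sg_neq_0 : sg <> 0.
Proof. destruct sg_sign; lra. Qed.

Lemma polar_frame_forms x y : W x y ->
  A1 x y ^ 2 = (cos (al x y) + h x y * sin (al x y)) ^ 2 /\
  A2 x y ^ 2 = (sin (al x y) - h x y * cos (al x y)) ^ 2 /\
  H x y ^ 2 = exp (2 * xi x y) * sin (al x y) ^ 2 /\
  K x y ^ 2 = exp (2 * xi x y) * cos (al x y) ^ 2.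
Proof.
  intros Hxy. destruct (frame x y Hxy) as (-> & -> & -> & ->).
  replace (2 * xi x y) with (xi x y + xi x y) by ring. rewrite exp_plus.
  destruct sg_sign as [-> | ->]; repeat split; ring.
Qed.

Lemma frame_nonzero x y : W x y ->
  sin (al x y) <> 0 /\ cos (al x y) <> 0 /\
  cos (al x y) + h x y * sin (al x y) <> 0 /\ sin (al x y) - h x y * cos (al x y) <> 0.
Proof.
  intros Hxy. destruct (frame x y Hxy) as (RH & RK & RA1 & RA2).
  destruct (nonzero x y Hxy) as (HH & HK & HA1 & HA2).
  repeat split; intro Z.
  - apply HH. rewrite RH, Z. ring.
  - apply HK. rewrite RK, Z. ring.
  - apply HA1. rewrite RA1, Z. ring.
  - apply HA2. rewrite RA2, Z. ring.
Qed.

Lemma dy_H x y : W x y ->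
  dy H x y = sg * exp (xi x y) * (dy xi x y * sin (al x y) + cos (al x y) * dy al x y).
Proof.
  intros Hxy. rewrite (dy_ext_on W W_open H (fun s t => sg * exp (xi s t) * sin (al s t)) x y Hxy).
  - apply dy_exp_sin; apply (smooth_on_ex_dy W); assumption.
  - intros s t Hst. apply (frame s t Hst).
Qed.

Lemma dx_K x y : W x y ->
  dx K x y = -1 * exp (xi x y) * (dx xi x y * cos (al x y) - sin (al x y) * dx al x y).
Proof.
  intros Hxy. rewrite (dx_ext_on W W_open K (fun s t => -1 * exp (xi s t) * cos (al s t)) x y Hxy).
  - apply dx_exp_cos; apply (smooth_on_ex_dx W); assumption.
  - intros s t Hst. destruct (frame s t Hst) as (_ & -> & _). ring.
Qed.

Lemma dy_A1 x y : W x y ->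
  dy A1 x y = sg * (- sin (al x y) * dy al x y + dy h x y * sin (al x y)
                    + h x y * cos (al x y) * dy al x y).
Proof.
  intros Hxy.
  rewrite (dy_ext_on W W_open A1 (fun s t => sg * (cos (al s t) + h s t * sin (al s t))) x y Hxy).
  - apply dy_cos_add_mul_sin; apply (smooth_on_ex_dy W); assumption.
  - intros s t Hst. apply (frame s t Hst).
Qed.

Lemma dx_A2 x y : W x y ->
  dx A2 x y = cos (al x y) * dx al x y - dx h x y * cos (al x y)
              + h x y * sin (al x y) * dx al x y.
Proof.
  intros Hxy.
  rewrite (dx_ext_on W W_open A2 (fun s t => sin (al s t) - h s t * cos (al s t)) x y Hxy).
  - apply dx_sin_sub_mul_cos; apply (smooth_on_ex_dx W); assumption.
  - intros s t Hst. apply (frame s t Hst).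
Qed.

Lemma dy_h_eq x y : W x y ->
  dy h x y = (h x y - sin (al x y) / cos (al x y)) * dy xi x y.
Proof.
  intros Hxy. destruct (frame x y Hxy) as (_ & RK & _ & RA2).
  destruct (frame_nonzero x y Hxy) as (Hs & Hc & _ & HP).
  destruct (codazzi x y Hxy) as (C1 & _).
  apply (eq_from_scaled_difference
           (sg * exp (xi x y) * sin (al x y) * cos (al x y) / (sin (al x y) - h x y * cos (al x y)))
           _ _ _ _ C1).
  - repeat apply Rmult_integral_contrapositive_currified;
      try apply Rinv_neq_0_compat; try assumption.
    + apply sg_neq_0.
    + apply Rgt_not_eq, exp_pos.
  - rewrite dy_H, dy_A1, RA2, RK by exact Hxy. field. split; assumption.
Qed.

Lemma dx_h_eq x y : W x y ->
  dx h x y = (h x y + cos (al x y) / sin (al x y)) * dx xi x y.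
Proof.
  intros Hxy. destruct (frame x y Hxy) as (RH & _ & RA1 & _).
  destruct (frame_nonzero x y Hxy) as (Hs & Hc & HQ & _).
  destruct (codazzi x y Hxy) as (_ & C2 & _).
  apply (eq_from_scaled_difference
           (exp (xi x y) * sin (al x y) * cos (al x y) / (cos (al x y) + h x y * sin (al x y)))
           _ _ _ _ C2).
  - repeat apply Rmult_integral_contrapositive_currified;
      try apply Rinv_neq_0_compat; try assumption.
    apply Rgt_not_eq, exp_pos.
  - rewrite dx_K, dx_A2, RA1, RH by exact Hxy. field. repeat split; try assumption. apply sg_neq_0.
Qed.

Lemma dyA1_div_A2 x y : W x y ->
  dy A1 x y / A2 x y = - sg * (dy al x y + dy xi x y * (sin (al x y) / cos (al x y))).
Proof.
  intros Hxy. destruct (frame x y Hxy) as (_ & _ & _ & RA2).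
  destruct (frame_nonzero x y Hxy) as (_ & Hc & _ & HP).
  rewrite dy_A1, dy_h_eq, RA2 by exact Hxy. field. split; assumption.
Qed.

Lemma dxA2_div_A1 x y : W x y ->
  dx A2 x y / A1 x y = - sg * (- dx al x y + dx xi x y * (cos (al x y) / sin (al x y))).
Proof.
  intros Hxy. destruct (frame x y Hxy) as (_ & _ & RA1 & _).
  destruct (frame_nonzero x y Hxy) as (Hs & _ & HQ & _).
  rewrite dx_A2, dx_h_eq, RA1 by exact Hxy.
  destruct sg_sign as [-> | ->]; field; split; assumption.
Qed.

Lemma gauss_eq x y : W x y ->
  dx (fun s t => - dx al s t + dx xi s t * (cos (al s t) / sin (al s t))) x y
  + dy (fun s t => dy al s t + dy xi s t * (sin (al s t) / cos (al s t))) x y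
  + exp (2 * xi x y) * sin (al x y) * cos (al x y) = 0.
Proof.
  intros Hxy. destruct (frame x y Hxy) as (RH & RK & _).
  destruct (codazzi x y Hxy) as (_ & _ & C3).
  apply (eq_from_scaled_difference (- sg) _ _ _ _ C3); [apply Ropp_neq_0_compat, sg_neq_0|].
  rewrite (dy_ext_on W W_open (fun s t => dy A1 s t / A2 s t)
             (fun s t => - sg * (dy al s t + dy xi s t * (sin (al s t) / cos (al s t)))) x y Hxy)
    by (intros s t Hst; apply dyA1_div_A2, Hst).
  rewrite (dx_ext_on W W_open (fun s t => dx A2 s t / A1 s t)
             (fun s t => - sg * (- dx al s t + dx xi s t * (cos (al s t) / sin (al s t)))) x y Hxy)
    by (intros s t Hst; apply dxA2_div_A1, Hst).
  unfold dx, dy. rewrite !Derive_scal, RH, RK.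
  replace (2 * xi x y) with (xi x y + xi x y) by ring. rewrite exp_plus. ring.
Qed.

(** Compatibility [h_xy = h_yx] of the two first-order equations for [h]. *)
Lemma dxdy_xi_eq x y : W x y ->
  dx (dy xi) x y = dx xi x y * dy xi x y
    + (dy al x y * cos (al x y) / sin (al x y)) * dx xi x y
    + (- dx al x y * sin (al x y) / cos (al x y)) * dy xi x y.
Proof.
  intros Hxy. destruct (frame_nonzero x y Hxy) as (Hs & Hc & _).
  assert (Hxx : dx (dy h) x y
    = (dx h x y - dx al x y * (sin (al x y) ^ 2 + cos (al x y) ^ 2) / cos (al x y) ^ 2)
        * dy xi x y
      + (h x y - sin (al x y) / cos (al x y)) * dx (dy xi) x y).
  { rewrite (dx_ext_on W W_open _
               (fun s t => (h s t - sin (al s t) / cos (al s t)) * dy xi s t) x y Hxy)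
      by (intros s t Hst; apply dy_h_eq, Hst).
    apply dx_sub_tan_mul; try (apply (smooth_on_ex_dx W); assumption); [|exact Hc].
    apply (xi_smooth (false :: nil) x y Hxy). }
  assert (Hyy : dy (dx h) x y
    = (dy h x y - dy al x y * (sin (al x y) ^ 2 + cos (al x y) ^ 2) / sin (al x y) ^ 2)
        * dx xi x y
      + (h x y + cos (al x y) / sin (al x y)) * dy (dx xi) x y).
  { rewrite (dy_ext_on W W_open _
               (fun s t => (h s t + cos (al s t) / sin (al s t)) * dx xi s t) x y Hxy)
      by (intros s t Hst; apply dx_h_eq, Hst).
    apply dy_add_cot_mul; try (apply (smooth_on_ex_dy W); assumption); [|exact Hs].
    apply (xi_smooth (true :: nil) x y Hxy). }
  rewrite (dx_dy_comm W W_open h x y h_smooth Hxy), Hyy,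
    <- (dx_dy_comm W W_open xi x y xi_smooth Hxy) in Hxx.
  rewrite dx_h_eq, dy_h_eq in Hxx by exact Hxy.
  apply (eq_from_scaled_difference
           ((sin (al x y) ^ 2 + cos (al x y) ^ 2) / (sin (al x y) * cos (al x y))) _ _ _ _ Hxx).
  - rewrite sin2_cos2_pow. unfold Rdiv. rewrite Rmult_1_l.
    apply Rinv_neq_0_compat, Rmult_integral_contrapositive_currified; assumption.
  - field. split; assumption.
Qed.

Lemma polar_frame_system x y : W x y ->
  dx h x y = (h x y + cos (al x y) / sin (al x y)) * dx xi x y /\
  dy h x y = (h x y - sin (al x y) / cos (al x y)) * dy xi x y /\
  dx (dy xi) x y = dx xi x y * dy xi x y
    + (dy al x y * cos (al x y) / sin (al x y)) * dx xi x y
    + (- dx al x y * sin (al x y) / cos (al x y)) * dy xi x y /\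
  dx (fun s t => - dx al s t + dx xi s t * (cos (al s t) / sin (al s t))) x y
    + dy (fun s t => dy al s t + dy xi s t * (sin (al s t) / cos (al s t))) x y
    + exp (2 * xi x y) * sin (al x y) * cos (al x y) = 0.
Proof.
  intros Hxy. split; [|split; [|split]].
  - apply dx_h_eq, Hxy.
  - apply dy_h_eq, Hxy.
  - apply dxdy_xi_eq, Hxy.
  - apply gauss_eq, Hxy.
Qed.

Lemma polar_frame_stress qn T1 T2 x y : W x y ->
  qn * A1 x y ^ 2 - 2 * (T2 * A1 x y) * H x y = qn ->
  qn * A2 x y ^ 2 - 2 * (T1 * A2 x y) * K x y = qn ->
  T1 = qn * exp (- xi x y) / 2 *
    ((2 * h x y * sin (al x y) + (1 - h x y ^ 2) * cos (al x y))
      / (sin (al x y) - h x y * cos (al x y))) /\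
  T2 = qn * exp (- xi x y) / 2 *
    ((2 * h x y * cos (al x y) - (1 - h x y ^ 2) * sin (al x y))
      / (cos (al x y) + h x y * sin (al x y))).
Proof.
  intros Hxy N1 N2. destruct (frame x y Hxy) as (RH & RK & RA1 & RA2).
  destruct (nonzero x y Hxy) as (HH & HK & HA1 & HA2).
  rewrite exp_Ropp.
  apply (stress_in_polar_frame qn sg _ _ _ _ (A1 x y) (A2 x y) (H x y) (K x y));
    auto using exp_pos, sin2_cos2_pow.
Qed.

End PolarFrame.

Lemma polar_frame_exists U H K A1 A2 x0 y0 :
  open2 U -> smooth_on U H -> smooth_on U K -> smooth_on U A1 -> smooth_on U A2 ->
  (forall x y, U x y -> H x y <> 0) ->
  (forall x y, U x y -> (H x y * A2 x y - K x y * A1 x y) ^ 2 = H x y ^ 2 + K x y ^ 2) ->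
  U x0 y0 ->
  exists eps sg h al xi, 0 < eps /\ (forall x y, square x0 y0 eps x y -> U x y) /\
    (sg = 1 \/ sg = -1) /\ smooth_on (square x0 y0 eps) h /\
    smooth_on (square x0 y0 eps) al /\ smooth_on (square x0 y0 eps) xi /\
    polar_frame (square x0 y0 eps) sg H K A1 A2 h al xi.
Proof.
  intros HU HH HK HA1 HA2 HH0 Hsq Hx0.
  pose (D := fun x y => H x y * A2 x y - K x y * A1 x y).
  assert (HD : smooth_on U D) by (apply smooth_on_minus; try apply smooth_on_mult; assumption).
  assert (HD0 : D x0 y0 <> 0).
  { intro Z. assert (0 < H x0 y0 ^ 2) by (apply pow2_gt_0, HH0, Hx0).
    generalize (Hsq x0 y0 Hx0) (pow2_ge_0 (K x0 y0)). fold (D x0 y0). rewrite Z. simpl. lra. }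
  destruct (square_sign_near U D x0 y0 HU HD Hx0 HD0) as (eps & sg & Heps & Hsg & Hnear).
  pose (e := fun x y => sg * D x y).
  set (W := square x0 y0 eps).
  assert (HW : open2 W) by apply open2_square.
  assert (HWU : forall x y, W x y -> U x y) by (intros x y Hxy; apply (Hnear x y Hxy)).
  assert (He_pos : forall x y, W x y -> 0 < e x y) by (intros x y Hxy; apply (Hnear x y Hxy)).
  assert (He2 : forall x y, W x y -> e x y ^ 2 = H x y ^ 2 + K x y ^ 2).
  { intros x y Hxy. rewrite <- (Hsq x y (HWU x y Hxy)). unfold e, D.
    destruct Hsg as [-> | ->]; ring. }
  assert (HeK : forall x y, W x y -> 0 < e x y - K x y).
  { intros x y Hxy. apply (polar_radius_gt _ (H x y)); auto. }
  assert (HeW : smooth_on W e)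
    by (apply (smooth_on_subset U); [exact HWU | apply smooth_on_scal; assumption]).
  exists eps, sg, (fun x y => (A1 x y * e x y + sg * K x y) / H x y),
    (fun x y => 2 * atan (sg * H x y / (e x y - K x y))), (fun x y => ln (e x y)).
  split; [exact Heps | split; [exact HWU | split; [exact Hsg |]]].
  assert (HHW : smooth_on W H) by (apply (smooth_on_subset U); assumption).
  assert (HKW : smooth_on W K) by (apply (smooth_on_subset U); assumption).
  assert (HA1W : smooth_on W A1) by (apply (smooth_on_subset U); assumption).
  split; [|split; [|split]].
  - apply (smooth_on_div W HW).
    + intros x y Hxy. apply HH0, HWU, Hxy.
    + apply (smooth_on_plus W HW); [apply (smooth_on_mult W HW) | apply (smooth_on_scal W HW)];
        assumption.
    + exact HHW.
  - apply (smooth_on_scal W HW), (smooth_on_atan W HW), (smooth_on_div W HW).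
    + intros x y Hxy. apply Rgt_not_eq, HeK, Hxy.
    + apply (smooth_on_scal W HW), HHW.
    + apply (smooth_on_minus W HW); assumption.
  - apply (smooth_on_ln W HW); assumption.
  - intros x y Hxy. rewrite exp_ln by apply He_pos, Hxy.
    apply polar_decomposition; auto.
Qed.

Theorem mainTheorem2
  (U : R -> R -> Prop) (r X Y : R -> R -> V3)
  (A1 A2 k1 k2 T1 T2 : R -> R -> R) (qn : R) :
  open2 U ->
  smoothV U r -> smoothV U X -> smoothV U Y ->
  smooth_on U A1 -> smooth_on U A2 -> smooth_on U k1 -> smooth_on U k2 ->
  smooth_on U T1 -> smooth_on U T2 ->
  qn <> 0 ->
  (* regular parametrization, nondegenerate third fundamental form *)
  (forall x y, U x y -> A1 x y <> 0 /\ A2 x y <> 0 /\ k1 x y <> 0 /\ k2 x y <> 0) ->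
  (* orthonormal frame X, Y *)
  (forall x y, U x y ->
     dot (X x y) (X x y) = 1 /\ dot (Y x y) (Y x y) = 1 /\ dot (X x y) (Y x y) = 0) ->
  (* curvature line coordinates: r_x = A1 X, r_y = A2 Y,
     N_x = H X, N_y = K Y with H = -k1 A1, K = -k2 A2 *)
  (forall x y, U x y ->
     dxV r x y = vscale (A1 x y) (X x y) /\ dyV r x y = vscale (A2 x y) (Y x y)) ->
  (forall x y, U x y ->
     dxV (normal X Y) x y = vscale (circ k1 A1 x y) (X x y) /\
     dyV (normal X Y) x y = vscale (circ k2 A2 x y) (Y x y)) ->
  (* Gauss-Mainardi-Codazzi equations (as recorded in the setting) *)
  (forall x y, U x y ->
     dy (circ k1 A1) x y = (dy A1 x y / A2 x y) * circ k2 A2 x y /\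
     dx (circ k2 A2) x y = (dx A2 x y / A1 x y) * circ k1 A1 x y /\
     dy (fun s t => dy A1 s t / A2 s t) x y + dx (fun s t => dx A2 s t / A1 s t) x y
       + circ k1 A1 x y * circ k2 A2 x y = 0) ->
  (* membrane equilibrium under constant normal load qn *)
  (forall x y, U x y ->
     dx T1 x y + (dx A1 x y / A1 x y) * (T1 x y - T2 x y) = 0 /\
     dy T2 x y + (dy A2 x y / A2 x y) * (T2 x y - T1 x y) = 0 /\
     k1 x y * T1 x y + k2 x y * T2 x y + qn = 0) ->
  (* 2nd kind: f = g = qn, with Abar1 = T2 A1, Abar2 = T1 A2 *)
  (forall x y, U x y ->
     qn * (A1 x y) ^ 2 - 2 * (T2 x y * A1 x y) * circ k1 A1 x y = qn /\
     qn * (A2 x y) ^ 2 - 2 * (T1 x y * A2 x y) * circ k2 A2 x y = qn) ->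
  forall x0 y0, U x0 y0 ->
  exists eps, 0 < eps /\ (forall x y, square x0 y0 eps x y -> U x y) /\
  exists h al xi : R -> R -> R,
    smooth_on (square x0 y0 eps) h /\ smooth_on (square x0 y0 eps) al /\
    smooth_on (square x0 y0 eps) xi /\
    forall x y, square x0 y0 eps x y ->
      (* first fundamental form *)
      (A1 x y) ^ 2 = (cos (al x y) + h x y * sin (al x y)) ^ 2 /\
      (A2 x y) ^ 2 = (sin (al x y) - h x y * cos (al x y)) ^ 2 /\
      (* third fundamental form *)
      (circ k1 A1 x y) ^ 2 = exp (2 * xi x y) * (sin (al x y)) ^ 2 /\
      (circ k2 A2 x y) ^ 2 = exp (2 * xi x y) * (cos (al x y)) ^ 2 /\
      (* the system *)
      dx h x y = (h x y + cos (al x y) / sin (al x y)) * dx xi x y /\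
      dy h x y = (h x y - sin (al x y) / cos (al x y)) * dy xi x y /\
      dx (dy xi) x y = dx xi x y * dy xi x y
        + (dy al x y * cos (al x y) / sin (al x y)) * dx xi x y
        + (- dx al x y * sin (al x y) / cos (al x y)) * dy xi x y /\
      dx (fun s t => - dx al s t + dx xi s t * (cos (al s t) / sin (al s t))) x y
        + dy (fun s t => dy al s t + dy xi s t * (sin (al s t) / cos (al s t))) x y
        + exp (2 * xi x y) * sin (al x y) * cos (al x y) = 0 /\
      (* stress resultants *)
      T1 x y = qn * exp (- xi x y) / 2 *
        ((2 * h x y * sin (al x y) + (1 - (h x y) ^ 2) * cos (al x y))
          / (sin (al x y) - h x y * cos (al x y))) /\
      T2 x y = qn * exp (- xi x y) / 2 *
        ((2 * h x y * cos (al x y) - (1 - (h x y) ^ 2) * sin (al x y))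
          / (cos (al x y) + h x y * sin (al x y))).
Proof.
  intros HU _ _ _ HA1 HA2 Hk1 Hk2 _ _ Hqn Hnz _ _ _ Hcod Hequil Hkind x0 y0 Hx0.
  set (H := circ k1 A1) in *. set (K := circ k2 A2) in *.
  assert (Hnz' : forall x y, U x y -> H x y <> 0 /\ K x y <> 0 /\ A1 x y <> 0 /\ A2 x y <> 0).
  { intros x y Hxy. destruct (Hnz x y Hxy) as (HA10 & HA20 & Hk10 & Hk20).
    repeat split; try apply circ_neq_0; assumption. }
  assert (Hsq : forall x y, U x y ->
            (H x y * A2 x y - K x y * A1 x y) ^ 2 = H x y ^ 2 + K x y ^ 2).
  { intros x y Hxy. destruct (Hequil x y Hxy) as (_ & _ & E), (Hkind x y Hxy) as (N1 & N2).
    apply (second_kind_identity qn _ _ _ _ (T1 x y) (T2 x y)); assumption. }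
  destruct (polar_frame_exists U H K A1 A2 x0 y0 HU (smooth_on_circ U k1 A1 HU Hk1 HA1)
              (smooth_on_circ U k2 A2 HU Hk2 HA2) HA1 HA2
              (fun x y Hxy => proj1 (Hnz' x y Hxy)) Hsq Hx0)
    as (eps & sg & h & al & xi & Heps & HWU & Hsg & Hh & Hal & Hxi & Hframe).
  set (W := square x0 y0 eps) in *.
  assert (HnzW : forall x y, W x y -> H x y <> 0 /\ K x y <> 0 /\ A1 x y <> 0 /\ A2 x y <> 0)
    by (intros x y Hxy; apply Hnz', HWU, Hxy).
  assert (HcodW : gauss_codazzi W H K A1 A2) by (intros x y Hxy; apply Hcod, HWU, Hxy).
  exists eps. split; [exact Heps | split; [exact HWU |]].
  exists h, al, xi. split; [exact Hh | split; [exact Hal | split; [exact Hxi |]]].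
  intros x y Hxy. destruct (Hkind x y (HWU x y Hxy)) as (N1 & N2).
  destruct (polar_frame_forms W sg H K A1 A2 h al xi Hsg Hframe x y Hxy) as (F1 & F2 & F3 & F4).
  destruct (polar_frame_system W sg H K A1 A2 h al xi (open2_square x0 y0 eps) Hsg Hh Hal Hxi
              Hframe HnzW HcodW x y Hxy) as (S1 & S2 & S3 & S4).
  destruct (polar_frame_stress W sg H K A1 A2 h al xi Hsg Hframe HnzW qn (T1 x y) (T2 x y) x y
              Hxy N1 N2) as (ST1 & ST2).
  repeat split; assumption.
Qed.
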